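(* Let $T,L$ be positive integers and $\epsilon\in(0,1)$. For $\rho=\{\rho_t^l\}\in[0,1]^{T\times L}$ let $F(\rho)=\sum_{t,l}\rho_t^l r_t^l b_t^l(\rho_t^l)$, $G(\rho)=1-\prod_{t=1}^T\prod_{l=1}^L\rho_t^l$, $H(\rho)=\sum_{t,l}(1-\rho_t^l)$. Let $\rho^\ast$ be an optimal solution of PA1: $\min F(\rho)$ s.t. $G(\rho)\le\epsilon$, $\rho\in[0,1]^{T\times L}$. Let $\tilde\lambda,\tilde\rho$ be optimal solutions of $\max_{\lambda\ge0}\min_{\rho\in[0,1]^{T\times L}}\{F(\rho)+\lambda[H(\rho)-\epsilon]\}$. Then $$0\le F(\tilde\rho)-F(\rho^\ast)\le\tilde\lambda\,\frac{TL(TL-1)}{2}\epsilon^2.$$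
   Context: For each $t\in\{1,\dots,T\}$, $l\in\{1,\dots,L\}$: $r_t^l$ is a positive integer and $b_t^l:[0,1]\to[0,b^l_{\max}]$ is strictly increasing and convex. $\rho_t^l$ is the probability of the event of successfully recruiting $r_t^l$ participants at time $t$, location $l$, and these events are independent. PA2 denotes the problem $\min F(\rho)$ s.t. $H(\rho)\le\epsilon$, $\rho\in[0,1]^{T\times L}$, so $F(\tilde\rho)$ is the optimal value of PA2 and $F(\rho^\ast)$ that of PA1. *)

From HB Require Import structures.
From mathcomp Require Import all_boot all_order all_algebra.
From mathcomp Require Import all_classical all_reals.
Set Implicit Arguments. Unset Strict Implicit. Unset Printing Implicit Defensive.
Import Order.TTheory GRing.Theory Num.Theory.
Local Open Scope ring_scope.
Local Open Scope classical_set_scope.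

Section Defs.
Variables (R : realType) (T L : nat).

Definition in_box (rho : 'I_T -> 'I_L -> R) : Prop :=
  forall t l, 0 <= rho t l <= 1.

Definition Fobj (r : 'I_T -> 'I_L -> nat) (b : 'I_T -> 'I_L -> R -> R)
  (rho : 'I_T -> 'I_L -> R) : R :=
  \sum_(t < T) \sum_(l < L) rho t l * (r t l)%:R * b t l (rho t l).

Definition Gcons (rho : 'I_T -> 'I_L -> R) : R :=
  1 - \prod_(t < T) \prod_(l < L) rho t l.

Definition Hcons (rho : 'I_T -> 'I_L -> R) : R :=
  \sum_(t < T) \sum_(l < L) (1 - rho t l).

Definition Lag r b (eps lam : R) (rho : 'I_T -> 'I_L -> R) : R :=
  Fobj r b rho + lam * (Hcons rho - eps).

Definition dualfun r b (eps lam : R) : R :=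
  inf [set Lag r b eps lam rho | rho in in_box].

Definition PA1_optimal r b (eps : R) (rho : 'I_T -> 'I_L -> R) : Prop :=
  in_box rho /\ Gcons rho <= eps /\
  forall rho', in_box rho' -> Gcons rho' <= eps -> Fobj r b rho <= Fobj r b rho'.

Definition dual_optimal r b (eps lam : R) (rho : 'I_T -> 'I_L -> R) : Prop :=
  0 <= lam /\
  (forall lam', 0 <= lam' -> dualfun r b eps lam' <= dualfun r b eps lam) /\
  in_box rho /\
  (forall rho', in_box rho' -> Lag r b eps lam rho <= Lag r b eps lam rho').
End Defs.

Definition maps_into01 {R : realType} (f : R -> R) (bmax : R) : Prop :=
  forall x, 0 <= x <= 1 -> 0 <= f x <= bmax.

Definition strictly_increasing01 {R : realType} (f : R -> R) : Prop :=
  forall x y, 0 <= x <= 1 -> 0 <= y <= 1 -> x < y -> f x < f y.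

Definition convex01 {R : realType} (f : R -> R) : Prop :=
  forall x y a, 0 <= x <= 1 -> 0 <= y <= 1 -> 0 <= a <= 1 ->
    f (a * x + (1 - a) * y) <= a * f x + (1 - a) * f y.

(* Along each coordinate the objective rho |-> rho r b(rho) is midpoint convex with
   defect r (x - y)(b x - b y) / 2, which is bounded below once |x - y| is, because b is
   strictly increasing.  Hence the minimiser rho~ of the Lagrangian at lam~ is sharp:
   a Lagrangian value close to the minimum forces H close to H(rho~).  Were
   (lam - lam~)(H(rho~) - eps) > 0 for some lam >= 0, a small step from lam~ towards lam
   would then strictly increase the dual function; so maximality of lam~ yields
   H(rho~) <= eps and lam~ (H(rho~) - eps) >= 0.  As G <= H, rho~ is feasible for PA1,
   whence F(rho~) >= F(rho_star).  Conversely
   F(rho~) <= L(lam~, rho~) <= L(lam~, rho_star) = F(rho_star) + lam~ (H(rho_star) - eps),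
   and the Bonferroni inequality H <= G + TL(TL - 1)/2 eps^2, valid since every
   1 - rho_star t l <= G(rho_star) <= eps, bounds the last term. *)

From mathcomp Require Import all_boot all_order all_algebra.
From mathcomp Require Import all_classical all_reals.
From mathcomp Require Import ring lra.
Import Order.TTheory GRing.Theory Num.Theory.
Set Implicit Arguments. Unset Strict Implicit. Unset Printing Implicit Defensive.
Local Open Scope ring_scope.
Local Open Scope classical_set_scope.

Section ProductBounds.
Variables (R : realFieldType) (I : Type) (x : I -> R).
Hypothesis x01 : forall i, 0 <= x i <= 1.

Lemma one_sub_prod_le_sum (s : seq I) :
  1 - \prod_(i <- s) x i <= \sum_(i <- s) (1 - x i).
Proof.
elim: s => [|a s IHs]; first by rewrite !big_nil; lra.
rewrite !big_cons.
have P1 : \prod_(i <- s) x i <= 1 by apply: prodr_ile1 => i _; exact: x01.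
have /andP[a0 a1] := x01 a; nra.
Qed.

Lemma sum_one_sub_le_size_mul (s : seq I) (e : R) :
  (forall i, 1 - x i <= e) -> \sum_(i <- s) (1 - x i) <= (size s)%:R * e.
Proof.
move=> xe; elim: s => [|a s IHs]; first by rewrite big_nil mul0r.
by rewrite big_cons /= -add1n natrD mulrDl mul1r lerD.
Qed.

Lemma sum_one_sub_le_bonferroni (s : seq I) (e : R) :
  (forall i, 1 - x i <= e) ->
  \sum_(i <- s) (1 - x i)
    <= 1 - \prod_(i <- s) x i + (size s)%:R * ((size s)%:R - 1) / 2 * e ^+ 2.
Proof.
move=> xe; elim: s => [|a s IHs]; first by rewrite !big_nil !mul0r; lra.
rewrite !big_cons /= -add1n natrD.
have P1 : \prod_(i <- s) x i <= 1 by apply: prodr_ile1 => i _; exact: x01.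
have PS := one_sub_prod_le_sum s.
have Se := sum_one_sub_le_size_mul s xe.
have /andP[a0 a1] := x01 a; have ea := xe a.
have : (1 - x a) * (1 - \prod_(i <- s) x i) <= e * ((size s)%:R * e).
  by apply: ler_pM; lra.
rewrite expr2 in IHs *; nra.
Qed.

End ProductBounds.

Lemma prodr_le_factor (R : realFieldType) (I : finType) (x : I -> R) (j : I) :
  (forall i, 0 <= x i <= 1) -> \prod_i x i <= x j.
Proof.
move=> x01; rewrite (bigD1 j) //=.
apply: ler_piMr; first by have /andP[] := x01 j.
by apply: prodr_ile1 => i _; exact: x01.
Qed.

Lemma ler_double_sum_term (R : realFieldType) (I J : finType) (F : I -> J -> R) i j :
  (forall i j, 0 <= F i j) -> F i j <= \sum_i \sum_j F i j.
Proof.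
move=> F0; rewrite (bigD1 i) //= (bigD1 j) //= -addrA lerDl.
by apply: addr_ge0; do ?[apply: sumr_ge0 => *]; exact: F0.
Qed.

Section StrictlyIncreasing.
Variables (R : realType) (f : R -> R).
Hypothesis f_incr : strictly_increasing01 f.

Lemma incr01_le x y : 0 <= x <= 1 -> 0 <= y <= 1 -> x <= y -> f x <= f y.
Proof.
move=> x01 y01; rewrite le_eqVlt => /orP[/eqP-> //|xy].
exact/ltW/f_incr.
Qed.

Lemma incr01_gap_ge0 x y : 0 <= x <= 1 -> 0 <= y <= 1 -> 0 <= (x - y) * (f x - f y).
Proof.
move=> x01 y01; have [xy|yx|->] := ltgtP x y.
- by have := f_incr x01 y01 xy; nra.
- by have := f_incr y01 x01 yx; nra.
- by rewrite subrr mul0r.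
Qed.

Lemma incr01_reflect : strictly_increasing01 (fun x => - f (1 - x)).
Proof.
rewrite /strictly_increasing01 => x y /andP[x0 x1] /andP[y0 y1] xy.
rewrite ltrN2; apply: f_incr; try (apply/andP; split); lra.
Qed.

Lemma incr01_right_gap y k : 0 <= y <= 1 -> 0 < k ->
  exists2 d, 0 < d & forall x, 0 <= x <= 1 -> y + k <= x -> d <= f x - f y.
Proof.
move=> y01 k0; have /andP[y0 y1] := y01.
have [yk1|] := lerP (y + k) 1; last by exists 1 => // x /andP[_ x1]; lra.
have yk01 : 0 <= y + k <= 1 by apply/andP; lra.
exists (f (y + k) - f y); first by rewrite subr_gt0; apply: f_incr => //; lra.
by move=> x x01 ykx; rewrite lerD2r incr01_le.
Qed.

End StrictlyIncreasing.

Lemma incr01_sharp (R : realType) (f : R -> R) (y k : R) :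
  strictly_increasing01 f -> 0 <= y <= 1 -> 0 < k ->
  exists2 c, 0 < c &
    forall x, 0 <= x <= 1 -> k <= `|x - y| -> c <= (x - y) * (f x - f y).
Proof.
(* The side [x < y] is the side [x > y] for the reflection [x |-> - f (1 - x)]. *)
move=> f_incr y01 k0; have /andP[y0 y1] := y01.
have [dr dr0 hdr] := incr01_right_gap f_incr y01 k0.
have [|dl dl0 hdl] := incr01_right_gap (incr01_reflect f_incr) (y := 1 - y) _ k0.
  by apply/andP; lra.
have dmin0 : 0 < Num.min dr dl by rewrite lt_min dr0 dl0.
have dminr : Num.min dr dl <= dr by rewrite ge_min lexx.
have dminl : Num.min dr dl <= dl by rewrite ge_min lexx orbT.
exists (k * Num.min dr dl); first exact: mulr_gt0.
move=> x x01; have /andP[x0 x1] := x01.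
have [xy|xy] := lerP 0 (x - y).
  rewrite ger0_norm // => kxy.
  by have := hdr x x01 ltac:(lra); nra.
rewrite ltr0_norm // => kxy.
have := hdl (1 - x) ltac:(apply/andP; lra) ltac:(lra).
by rewrite !subKr; nra.
Qed.

Lemma convex01_midpoint_gap (R : realType) (f : R -> R) (x y : R) :
  convex01 f -> 0 <= x <= 1 -> 0 <= y <= 1 ->
  (x + y) * f ((x + y) / 2) + (x - y) * (f x - f y) / 2 <= x * f x + y * f y.
Proof.
move=> f_cvx x01 y01; have /andP[x0 x1] := x01; have /andP[y0 y1] := y01.
have := f_cvx x y (1 / 2) x01 y01 ltac:(apply/andP; lra).
have -> : 1 / 2 * x + (1 - 1 / 2) * y = (x + y) / 2 by field.
move=> fmid.
have : (x + y) * f ((x + y) / 2) <= (x + y) * (1 / 2 * f x + (1 - 1 / 2) * f y).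
  by apply: ler_wpM2l => //; lra.
lra.
Qed.

Section LagrangianDual.
Variables (R : realType) (X : Type) (D : set X) (F g : X -> R).
Variables (lam0 : R) (x0 : X).
Hypotheses (Dx0 : D x0) (x0_min : forall x, D x -> F x0 + lam0 * g x0 <= F x + lam0 * g x).

Lemma inf_lagrangian_ge (lam m : R) :
  (forall x, D x -> m <= F x + lam * g x) -> m <= inf [set F x + lam * g x | x in D].
Proof.
move=> lb; apply: lb_le_inf; first by exists (F x0 + lam * g x0), x0.
by move=> _ [x Dx <-]; exact: lb.
Qed.

Lemma inf_lagrangian_min : inf [set F x + lam0 * g x | x in D] = F x0 + lam0 * g x0.
Proof.
apply/eqP; rewrite eq_le inf_lagrangian_ge // andbT.
apply: ge_inf; last by exists x0.
by exists (F x0 + lam0 * g x0) => _ [x Dx <-]; exact: x0_min.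
Qed.

Variable M : R.
Hypothesis g_bounded : forall x, D x -> `|g x| <= M.
Hypothesis x0_sharp : forall eta, 0 < eta -> exists2 c, 0 < c &
  forall x, D x -> F x + lam0 * g x < F x0 + lam0 * g x0 + c -> `|g x - g x0| <= eta.

(* Near [x0] the step [t * d] raises the Lagrangian by about [t * d * g x0 > 0]; far
   from [x0] the sharpness margin [c] absorbs the change, since [g] is bounded. *)
Lemma lagrangian_ascent d : 0 < d * g x0 ->
  exists2 t, 0 < t <= 1 &
    F x0 + lam0 * g x0 < inf [set F x + (lam0 + t * d) * g x | x in D].
Proof.
move=> dg0; set a := d * g x0 in dg0.
have d0 : 0 < `|d|.
  by rewrite normr_gt0; apply/eqP => d0; move: dg0; rewrite /a d0 mul0r ltxx.
have eta0 : 0 < a / (2 * `|d|) by apply: divr_gt0; lra.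
have [c c0 x_near] := x0_sharp eta0.
have M0 : 0 <= M by apply: le_trans (g_bounded Dx0).
set t := Num.min 1 (c / (2 * (`|d| * M + 1))).
have t0 : 0 < t by rewrite lt_min ltr01 /= divr_gt0 //; nra.
have t1 : t <= 1 by rewrite ge_min lexx.
have tM : t * (`|d| * M) <= c / 2.
  have : t <= c / (2 * (`|d| * M + 1)) by rewrite ge_min lexx orbT.
  rewrite ler_pdivlMr; last by nra.
  nra.
exists t; first by rewrite t0 t1.
set mu := Num.min (c / 2) (t * a / 2).
have mu0 : 0 < mu by rewrite /mu lt_min !divr_gt0 //; exact: mulr_gt0.
apply: lt_le_trans (inf_lagrangian_ge (m := F x0 + lam0 * g x0 + mu) _); first lra.
move=> x Dx; have Mx := g_bounded Dx; have := x0_min Dx.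
have -> : F x + (lam0 + t * d) * g x = F x + lam0 * g x + t * (d * g x) by ring.
have [near|far] := ltP (F x + lam0 * g x) (F x0 + lam0 * g x0 + c).
- have dgx : a / 2 <= d * g x.
    have := ler_wpM2l (ltW d0) (x_near x Dx near).
    have -> : `|d| * (a / (2 * `|d|)) = a / 2 by field; rewrite gt_eqF.
    by rewrite -normrM => /ler_normlP[]; rewrite /a; lra.
  have := ler_wpM2l (ltW t0) dgx.
  have : mu <= t * a / 2 by rewrite /mu ge_min lexx orbT.
  lra.
- have dgx : - (`|d| * M) <= d * g x.
    have : `|d * g x| <= `|d| * M by rewrite normrM ler_wpM2l.
    by move/ler_normlP => [h _]; lra.
  have := ler_wpM2l (ltW t0) dgx.
  have : mu <= c / 2 by rewrite /mu ge_min lexx.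
  lra.
Qed.

Lemma dual_argmax_slope_le0 : 0 <= lam0 ->
  (forall lam, 0 <= lam ->
     inf [set F x + lam * g x | x in D] <= inf [set F x + lam0 * g x | x in D]) ->
  forall lam, 0 <= lam -> (lam - lam0) * g x0 <= 0.
Proof.
move=> lam00 lam0_max lam lam_ge0; rewrite leNgt; apply/negP => slope.
have [t /andP[t0 t1] ascent] := lagrangian_ascent slope.
have := lam0_max (lam0 + t * (lam - lam0)) ltac:(nra).
rewrite inf_lagrangian_min; lra.
Qed.

End LagrangianDual.

Section Constraints.
Variables (R : realType) (T L : nat).
Implicit Types (rho sigma : 'I_T -> 'I_L -> R).
Local Notation N := ((T * L)%:R : R).

Lemma double_sum_const (k : R) : \sum_(t < T) \sum_(l < L) k = N * k.
Proof. by rewrite !sumr_const !card_ord -mulrnA mulr_natl mulnC. Qed.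

Lemma Hcons_bounds rho : in_box rho -> 0 <= Hcons rho <= N.
Proof.
move=> rb; apply/andP; split.
  by apply: sumr_ge0 => t _; apply: sumr_ge0 => l _; have /andP[] := rb t l; lra.
rewrite -[leRHS]mulr1 -double_sum_const; apply: ler_sum => t _; apply: ler_sum => l _.
by have /andP[] := rb t l; lra.
Qed.

Lemma Hcons_lipschitz rho sigma (k : R) :
  (forall t l, `|rho t l - sigma t l| <= k) -> `|Hcons rho - Hcons sigma| <= N * k.
Proof.
move=> close; rewrite /Hcons -sumrB -double_sum_const.
apply: le_trans (ler_norm_sum _ _ _) _; apply: ler_sum => t _.
rewrite -sumrB; apply: le_trans (ler_norm_sum _ _ _) _; apply: ler_sum => l _.
by rewrite opprB addrC subrKA distrC.
Qed.

Lemma Gcons_Hcons_pairs rho :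
  Gcons rho = 1 - \prod_(p : 'I_T * 'I_L) rho p.1 p.2 /\
  Hcons rho = \sum_(p : 'I_T * 'I_L) (1 - rho p.1 p.2).
Proof. by rewrite /Gcons /Hcons !pair_bigA. Qed.

Lemma Gcons_le_Hcons rho : in_box rho -> Gcons rho <= Hcons rho.
Proof.
move=> rb; have [-> ->] := Gcons_Hcons_pairs rho.
by apply: one_sub_prod_le_sum => p; exact: rb.
Qed.

Lemma Hcons_le_Gcons_add rho (eps : R) : in_box rho -> Gcons rho <= eps ->
  Hcons rho <= Gcons rho + N * (N - 1) / 2 * eps ^+ 2.
Proof.
move=> rb Geps; have [EG EH] := Gcons_Hcons_pairs rho.
have size_pairs : size (index_enum ('I_T * 'I_L)%type) = (T * L)%N.
  by have := card_prod 'I_T 'I_L; rewrite !card_ord cardT enumT => <-.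
rewrite EH EG -size_pairs; apply: sum_one_sub_le_bonferroni => [p|p]; first exact: rb.
apply: le_trans Geps; rewrite EG lerD2l lerN2.
by apply: prodr_le_factor => q; exact: rb.
Qed.

End Constraints.

Section SharpMinimizer.
Variables (R : realType) (T L : nat) (r : 'I_T -> 'I_L -> nat) (b : 'I_T -> 'I_L -> R -> R).
Hypotheses (r_gt0 : forall t l, (0 < r t l)%N)
  (b_incr : forall t l, strictly_increasing01 (b t l))
  (b_cvx : forall t l, convex01 (b t l)).
Variables (eps lam : R) (rho0 : 'I_T -> 'I_L -> R).
Hypotheses (rho0_box : in_box rho0)
  (rho0_min : forall rho, in_box rho -> Lag r b eps lam rho0 <= Lag r b eps lam rho).

Definition mono_gap (rho : 'I_T -> 'I_L -> R) : R :=
  \sum_(t < T) \sum_(l < L)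
    (r t l)%:R * ((rho t l - rho0 t l) * (b t l (rho t l) - b t l (rho0 t l))).

(* Compare [rho] and [rho0] with their midpoint: the Lagrangian is affine in [H] and
   midpoint convex in [F] up to the defect [mono_gap]. *)
Lemma Lag_ge_mono_gap rho : in_box rho ->
  mono_gap rho / 2 <= Lag r b eps lam rho - Lag r b eps lam rho0.
Proof.
move=> rho_box; pose mid t l := (rho t l + rho0 t l) / 2.
have mid_box : in_box mid.
  move=> t l; have /andP[? ?] := rho_box t l; have /andP[? ?] := rho0_box t l.
  by apply/andP; split; rewrite /mid; lra.
have Hmid : 2 * Hcons mid = Hcons rho + Hcons rho0.
  rewrite /Hcons -big_split mulr_sumr; apply: eq_bigr => t _.
  by rewrite -big_split mulr_sumr; apply: eq_bigr => l _; rewrite /mid /=; lra.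
have Fmid : 2 * Fobj r b mid + mono_gap rho / 2 <= Fobj r b rho + Fobj r b rho0.
  rewrite /Fobj /mono_gap mulr_sumr mulr_suml -!big_split /=; apply: ler_sum => t _.
  rewrite mulr_sumr mulr_suml -!big_split /=; apply: ler_sum => l _.
  have := convex01_midpoint_gap (b_cvx t l) (rho_box t l) (rho0_box t l).
  have : 0 <= ((r t l)%:R : R) by rewrite ler0n.
  rewrite /mid; nra.
have := rho0_min mid_box; rewrite /Lag; nra.
Qed.

Lemma mono_gap_ge_coord rho t l : in_box rho ->
  (rho t l - rho0 t l) * (b t l (rho t l) - b t l (rho0 t l)) <= mono_gap rho.
Proof.
move=> rho_box; have r1 : 1 <= ((r t l)%:R : R) by rewrite ler1n.
have gap0 t' l' := incr01_gap_ge0 (b_incr t' l') (rho_box t' l') (rho0_box t' l').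
rewrite /mono_gap; apply: le_trans (ler_double_sum_term t l _) => /=.
  by rewrite ler_peMl.
by move=> t' l'; apply: mulr_ge0; [rewrite ler0n | exact: gap0].
Qed.

Lemma Lag_sharp_min eta : 0 < eta -> exists2 c, 0 < c &
  forall rho, in_box rho -> Lag r b eps lam rho < Lag r b eps lam rho0 + c ->
    `|Hcons rho - Hcons rho0| <= eta.
Proof.
(* Dividing by [N + 1], not [N], avoids the junk value [eta / 0 = 0] if [T * L = 0]. *)
move=> eta0; set N := ((T * L)%:R : R).
have N0 : 0 <= N by rewrite ler0n.
have k0 : 0 < eta / (N + 1) by apply: divr_gt0; lra.
have : forall p : 'I_T * 'I_L, exists c, 0 < c /\
    forall x, 0 <= x <= 1 -> eta / (N + 1) <= `|x - rho0 p.1 p.2| ->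
      c <= (x - rho0 p.1 p.2) * (b p.1 p.2 x - b p.1 p.2 (rho0 p.1 p.2)).
  move=> p; have [c c0 hc] := incr01_sharp (b_incr p.1 p.2) (rho0_box p.1 p.2) k0.
  by exists c.
move/boolp.choice => [c c_sharp].
set cmin := \big[Num.min/1]_p c p.
have cmin0 : 0 < cmin by apply: lt_bigmin => // p _; have [] := c_sharp p.
exists (cmin / 2); first exact: divr_gt0.
move=> rho rho_box Lag_near.
have close t l : `|rho t l - rho0 t l| <= eta / (N + 1).
  rewrite leNgt; apply/negP => /ltW far.
  have [_ /(_ _ (rho_box t l) far) c_le] := c_sharp (t, l).
  have := mono_gap_ge_coord t l rho_box; have := Lag_ge_mono_gap rho_box.
  have : cmin <= c (t, l) by exact: bigmin_le.
  lra.
apply: le_trans (Hcons_lipschitz close) _.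
rewrite mulrA ler_pdivrMr; lra.
Qed.

End SharpMinimizer.

Theorem theorem1 (R : realType) (T L : nat) (hT : (0 < T)%N) (hL : (0 < L)%N)
  (eps : R) (heps : 0 < eps < 1)
  (r : 'I_T -> 'I_L -> nat) (hr : forall t l, (0 < r t l)%N)
  (bmax : 'I_L -> R) (b : 'I_T -> 'I_L -> R -> R)
  (hb_range : forall t l, maps_into01 (b t l) (bmax l))
  (hb_inc : forall t l, strictly_increasing01 (b t l))
  (hb_cvx : forall t l, convex01 (b t l))
  (rho_star : 'I_T -> 'I_L -> R) (h_star : PA1_optimal r b eps rho_star)
  (lam_t : R) (rho_t : 'I_T -> 'I_L -> R) (h_t : dual_optimal r b eps lam_t rho_t) :
  0 <= Fobj r b rho_t - Fobj r b rho_star /\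
  Fobj r b rho_t - Fobj r b rho_star
    <= lam_t * (((T * L)%:R * ((T * L)%:R - 1)) / 2) * eps ^+ 2.
Proof.
have [lam_ge0 [lam_max [rho_t_box rho_t_min]]] := h_t.
have [rho_star_box [G_star rho_star_min]] := h_star.
have /andP[eps0 _] := heps.
have H_bounded (rho : 'I_T -> 'I_L -> R) :
    in_box rho -> `|Hcons rho - eps| <= (T * L)%:R + eps.
  by move=> /Hcons_bounds /andP[H0 HN]; apply/ler_normlP; split; lra.
have H_sharp eta : 0 < eta -> exists2 c, 0 < c & forall rho, in_box rho ->
    Lag r b eps lam_t rho < Lag r b eps lam_t rho_t + c ->
    `|(Hcons rho - eps) - (Hcons rho_t - eps)| <= eta.
  move=> /(Lag_sharp_min hr hb_inc hb_cvx rho_t_box rho_t_min)[c c0 near].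
  by exists c => // rho rho_box /near; rewrite opprB subrKA; exact.
have slope := dual_argmax_slope_le0 (F := Fobj r b) (g := fun rho => Hcons rho - eps)
  rho_t_box rho_t_min H_bounded H_sharp lam_ge0 lam_max.
have feasible : Hcons rho_t <= eps.
  by have := slope (lam_t + 1) ltac:(lra); rewrite addrAC subrr add0r mul1r subr_le0.
have slack : 0 <= lam_t * (Hcons rho_t - eps) by have := slope 0 (lexx 0); lra.
split.
  have := rho_star_min rho_t rho_t_box (le_trans (Gcons_le_Hcons rho_t_box) feasible).
  lra.
have H_star := Hcons_le_Gcons_add rho_star_box G_star.
have : lam_t * (Hcons rho_star - eps)
    <= lam_t * ((T * L)%:R * ((T * L)%:R - 1) / 2 * eps ^+ 2).
  by apply: ler_wpM2l => //; lra.
have := rho_t_min rho_star rho_star_box; rewrite /Lag; lra.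
Qed.
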